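(* Let $\alpha=1$ and $\lambda\in\mathbb{N}$. Let $\phi(x;\lambda)$, $\lambda=0,1,2,\dots$, be defined by $\phi(x;0)=1$, $\phi(x;1)=\frac{I_1(x)}{I_0(x)}$ and $$\phi(x;\lambda+1)+\phi(x;\lambda-1)=\frac{2\lambda}{x}\frac{\phi(x;\lambda)}{1-\phi^2(x;\lambda)}.$$ Let $$y(x)=\frac{\phi(x;\lambda+1)}{\phi(x;\lambda)},\qquad R(x)=y'(x)+y^2(x)+\frac{(1-2\lambda)y(x)}{x}+1,\qquad g(s;1,\lambda)=1-\frac{2}{R(\sqrt s)},$$ $$\mathcal{H}(s;1,\lambda)=\frac{(sg'(s;1,\lambda))^2}{4g(s;1,\lambda)(g(s;1,\lambda)-1)^2}-\frac{(\lambda+g(s;1,\lambda))^2}{4g(s;1,\lambda)}+\frac{sg(s;1,\lambda)}{4(g(s;1,\lambda)-1)}.$$ Then $g(s;1,\lambda)$ is a closed-form solution of $$g''=\frac{3g-1}{2g(g-1)}(g')^2-\frac{g'}{s}+\frac{(g-1)^2}{2s^2}\left(g-\frac{\lambda^2}{g}\right)+\frac{g}{2s}$$ (i.e. $P_V(\frac12,-\frac{\lambda^2}{2},\frac12,0)$), and $\mathcal{H}(s;1,\lambda)$ is the corresponding solution of $(s\mathcal{H}'')^2=\mathcal{H}'(4\mathcal{H}'-1)(\mathcal{H}-s\mathcal{H}')+\frac1{16}\left[4(1+\lambda)\mathcal{H}'-\lambda\right]^2$.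
   Context: $I_k$ denotes the modified Bessel function of the first kind of order $k$; primes denote derivatives. *)

From Stdlib Require Import Reals Arith.
From Coquelicot Require Import Coquelicot.
Open Scope R_scope.

Definition besselI (k : nat) (x : R) : R :=
  Series (fun m : nat => (x / 2) ^ (2 * m + k) / (INR (Factorial.fact m) * INR (Factorial.fact (m + k)))).

(* phi_pair x n = (phi(x;n), phi(x;n+1)), with phi(x;0)=1, phi(x;1)=I_1/I_0 and
   phi(x;l+1) = (2l/x) phi(x;l)/(1-phi(x;l)^2) - phi(x;l-1) for l >= 1. *)
Fixpoint phi_pair (x : R) (n : nat) : R * R :=
  match n with
  | O => (1, besselI 1 x / besselI 0 x)
  | S n' => let (a, b) := phi_pair x n' in
            (b, 2 * INR n / x * (b / (1 - b ^ 2)) - a)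
  end.

Definition phi (x : R) (n : nat) : R := fst (phi_pair x n).

Definition yfun (lam : nat) (x : R) : R := phi x (S lam) / phi x lam.

Definition Rfun (lam : nat) (x : R) : R :=
  Derive (yfun lam) x + (yfun lam x) ^ 2
  + (1 - 2 * INR lam) * yfun lam x / x + 1.

Definition gfun (lam : nat) (s : R) : R := 1 - 2 / Rfun lam (sqrt s).

Definition Hfun (lam : nat) (s : R) : R :=
  let g := gfun lam s in
  (s * Derive (gfun lam) s) ^ 2 / (4 * g * (g - 1) ^ 2)
  - (INR lam + g) ^ 2 / (4 * g)
  + s * g / (4 * (g - 1)).

(* Non-degeneracy at s: s > 0 and all denominators occurring in the
   construction of phi, y, R, g and in the Painleve equations are nonzero. *)
Definition regular_at (lam : nat) (s : R) : Prop :=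
  0 < s /\
  besselI 0 (sqrt s) <> 0 /\
  (forall k : nat, (1 <= k <= lam)%nat -> 1 - (phi (sqrt s) k) ^ 2 <> 0) /\
  phi (sqrt s) lam <> 0 /\
  Rfun lam (sqrt s) <> 0 /\
  gfun lam s <> 0 /\
  gfun lam s <> 1.

From Stdlib Require Import Reals Lra Lia Factorial.
From Coquelicot Require Import Coquelicot.
Open Scope R_scope.

(* With u = phi(x;lam) and v = phi(x;lam+1), the derivatives I0' = I1 and
   I1' = I0 - I1/x together with the recurrence show, by induction on lam, that
   (u, v) solves the Riccati system
     x u' = lam u - x (1 - u^2) v,    x v' = x (1 - v^2) u - (lam + 1) v.
   Along this system y = v/u has a derivative rational in (x, u, v), which gives
   R = 2 D / (x u^2) and g = N / D with N = v (x v - x u^2 v - 2 lam u) and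
   D = N + x u^2.  Differentiating once more with the system, g', g'', H, H'
   and H'' are rational functions of (x, u, v) with x = sqrt s, and both
   Painleve equations reduce to identities between rational functions. *)

Lemma is_derive_eq (f : R -> R) (x l l' : R) : is_derive f x l -> l = l' -> is_derive f x l'.
Proof. intros H <-. exact H. Qed.

Lemma is_derive_comp_sqrt (f : R -> R) (t a : R) : 0 < t ->
  is_derive f (sqrt t) (a / sqrt t) -> is_derive (fun z => f (sqrt z)) t (a / (2 * t)).
Proof.
  intros Ht Hf.
  assert (Hx : 0 < sqrt t) by (apply sqrt_lt_R0; exact Ht).
  assert (Hsqrt : is_derive sqrt t (/ (2 * sqrt t))) by (auto_derive; [lra | field; lra]).
  assert (E : / (2 * sqrt t) * (a / sqrt t) = a / (2 * t)).
  { rewrite <- (sqrt_sqrt t) at 3 by lra. field. lra. }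
  rewrite <- E. exact (is_derive_comp f sqrt t _ _ Hf Hsqrt).
Qed.

Lemma is_derive_Derive_near (f f' : R -> R) (x l : R) :
  locally x (fun t => is_derive f t (f' t)) -> is_derive f' x l -> is_derive (Derive f) x l.
Proof.
  intros Hf Hf'. apply is_derive_ext_loc with f'; [|exact Hf'].
  apply (filter_imp _ _ (fun t Ht => eq_sym (is_derive_unique _ _ _ Ht)) Hf).
Qed.

Lemma locally_Rabs (P : R -> Prop) (s : R) :
  (exists eps, 0 < eps /\ forall t, Rabs (t - s) < eps -> P t) -> locally s P.
Proof. intros (eps & He & HP). exists (mkposreal eps He). exact HP. Qed.

Ltac INR_neq_0 :=
  repeat split; first [apply INR_fact_neq_0 | apply not_0_INR; discriminate].

Definition besselI_coef (k m : nat) : R := / (INR (fact m) * INR (fact (m + k))).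

Lemma INR_fact_S n : INR (fact (S n)) = INR (S n) * INR (fact n).
Proof. exact (mult_INR (S n) (fact n)). Qed.

Lemma besselI_PSeries k x :
  besselI k x = (x / 2) ^ k * PSeries (besselI_coef k) (x ^ 2 / 4).
Proof.
  unfold besselI, PSeries. rewrite <- Series_scal_l. apply Series_ext. intros m.
  rewrite pow_add, pow_mult. unfold besselI_coef.
  replace ((x / 2) ^ 2) with (x ^ 2 / 4) by field. unfold Rdiv. ring.
Qed.

Lemma besselI_coef_ratio k n :
  besselI_coef k (S n) / besselI_coef k n = / (INR (S n) * INR (S (n + k))).
Proof.
  unfold besselI_coef. rewrite Nat.add_succ_l, !INR_fact_S. field. INR_neq_0.
Qed.

Lemma CV_radius_besselI_coef k : CV_radius (besselI_coef k) = p_infty.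
Proof.
  apply CV_radius_infinite_DAlembert.
  - intros n. apply Rinv_neq_0_compat, Rmult_integral_contrapositive_currified;
      apply INR_fact_neq_0.
  - apply is_lim_seq_le_le with (fun _ => 0) (fun n => / INR (S n)).
    + intros n. rewrite besselI_coef_ratio.
      assert (1 <= INR (S n)) by (rewrite S_INR; pose proof (pos_INR n); lra).
      assert (1 <= INR (S (n + k))) by (rewrite S_INR; pose proof (pos_INR (n + k)); lra).
      rewrite Rabs_pos_eq by (left; apply Rinv_0_lt_compat; nra).
      split; [left; apply Rinv_0_lt_compat; nra|].
      apply Rinv_le_contravar; nra.
    + apply is_lim_seq_const.
    + apply (is_lim_seq_incr_1 (fun n => / INR n)).
      replace (Finite 0) with (Rbar_inv p_infty) by reflexivity.
      apply is_lim_seq_inv; [apply is_lim_seq_INR | discriminate].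
Qed.

Lemma besselI_coef_radius k z : Rbar_lt (Rabs z) (CV_radius (besselI_coef k)).
Proof. rewrite CV_radius_besselI_coef. exact I. Qed.

Lemma PS_derive_besselI_coef k n : PS_derive (besselI_coef k) n = besselI_coef (S k) n.
Proof.
  unfold PS_derive, besselI_coef. rewrite Nat.add_succ_r, Nat.add_succ_l, !INR_fact_S.
  field. INR_neq_0.
Qed.

Lemma is_derive_besselI_series k z :
  is_derive (PSeries (besselI_coef k)) z (PSeries (besselI_coef (S k)) z).
Proof.
  rewrite <- (PSeries_ext _ _ _ (PS_derive_besselI_coef k)).
  apply is_derive_PSeries, besselI_coef_radius.
Qed.

Lemma besselI_coef_rec k n :
  besselI_coef k n = INR (S k) * besselI_coef (S k) n + PS_incr_1 (besselI_coef (S (S k))) n.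
Proof.
  unfold besselI_coef. destruct n as [|m]; simpl PS_incr_1.
  - change zero with 0. rewrite !Nat.add_0_l, INR_fact_S, Rplus_0_r. field. INR_neq_0.
  - rewrite ?Nat.add_succ_r, ?Nat.add_succ_l, !INR_fact_S, !S_INR, !plus_INR.
    pose proof (pos_INR m). pose proof (pos_INR k).
    field. repeat split; first [apply INR_fact_neq_0 | lra].
Qed.

Lemma besselI_series_rec k z :
  PSeries (besselI_coef k) z =
  INR (S k) * PSeries (besselI_coef (S k)) z + z * PSeries (besselI_coef (S (S k))) z.
Proof.
  transitivity (PSeries (PS_plus (PS_scal (INR (S k)) (besselI_coef (S k)))
                                (PS_incr_1 (besselI_coef (S (S k))))) z).
  { apply PSeries_ext, besselI_coef_rec. }
  rewrite PSeries_plus, PSeries_scal, PSeries_incr_1; [reflexivity | |].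
  - apply CV_radius_inside.
    rewrite CV_radius_scal by (apply not_0_INR; discriminate). apply besselI_coef_radius.
  - apply CV_radius_inside. rewrite CV_radius_incr_1. apply besselI_coef_radius.
Qed.

Lemma besselI_rec k x : x <> 0 ->
  besselI k x = 2 * INR (S k) / x * besselI (S k) x + besselI (S (S k)) x.
Proof.
  intros Hx. rewrite !besselI_PSeries, (besselI_series_rec k). simpl pow. field. exact Hx.
Qed.

Lemma is_derive_besselI k x : x <> 0 ->
  is_derive (besselI k) x (besselI (S k) x + INR k / x * besselI k x).
Proof.
  intros Hx.
  apply is_derive_ext with (fun t => (t / 2) ^ k * PSeries (besselI_coef k) (t ^ 2 / 4)).
  { intros t. symmetry. apply besselI_PSeries. }
  assert (D := is_derive_besselI_series k (x ^ 2 / 4)).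
  auto_derive; [eexists; exact D|].
  replace (x * (x * 1) * / 4) with (x ^ 2 / 4) by (simpl; field).
  assert (ED : Derive (fun z => PSeries (besselI_coef k) z) (x ^ 2 / 4)
               = PSeries (besselI_coef (S k)) (x ^ 2 / 4)) by exact (is_derive_unique _ _ _ D).
  rewrite ED, !besselI_PSeries.
  destruct k as [|k]; simpl pow; simpl Nat.pred; simpl INR; unfold Rdiv; field; exact Hx.
Qed.

Lemma is_derive_besselI_S k x : x <> 0 ->
  is_derive (besselI (S k)) x (besselI k x - INR (S k) / x * besselI (S k) x).
Proof.
  intros Hx. eapply is_derive_eq; [exact (is_derive_besselI (S k) x Hx)|].
  rewrite (besselI_rec k x Hx). field. exact Hx.
Qed.

(* The Riccati system of the header, x u' = rhs_u and x v' = rhs_v, with L = lam. *)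
Definition rhs_u (L x u v : R) : R := L * u - x * (1 - u ^ 2) * v.
Definition rhs_v (L x u v : R) : R := x * (1 - v ^ 2) * u - (L + 1) * v.
Definition phi_next (L x u v : R) : R := 2 * (L + 1) / x * (v / (1 - v ^ 2)) - u.

Lemma phi_0 x : phi x 0 = 1.
Proof. reflexivity. Qed.

Lemma phi_1 x : phi x 1 = besselI 1 x / besselI 0 x.
Proof. reflexivity. Qed.

Lemma phi_rec x n : phi x (S (S n)) = phi_next (INR n) x (phi x n) (phi x (S n)).
Proof.
  unfold phi, phi_next. rewrite <- S_INR. simpl phi_pair.
  destruct (phi_pair x n). reflexivity.
Qed.

Lemma is_derive_riccati_step (L x : R) (A B : R -> R) : 0 < x ->
  is_derive A x (rhs_u L x (A x) (B x) / x) -> is_derive B x (rhs_v L x (A x) (B x) / x) ->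
  1 - B x ^ 2 <> 0 ->
  is_derive B x (rhs_u (L + 1) x (B x) (phi_next L x (A x) (B x)) / x) /\
  is_derive (fun z => phi_next L z (A z) (B z)) x
    (rhs_v (L + 1) x (B x) (phi_next L x (A x) (B x)) / x).
Proof.
  intros Hx HA HB Hb. split.
  - replace (rhs_u (L + 1) x (B x) (phi_next L x (A x) (B x)))
      with (rhs_v L x (A x) (B x)) by (unfold rhs_u, rhs_v, phi_next; field; lra).
    exact HB.
  - unfold phi_next.
    assert (EA : Derive (fun z => A z) x = rhs_u L x (A x) (B x) / x)
      by exact (is_derive_unique _ _ _ HA).
    assert (EB : Derive (fun z => B z) x = rhs_v L x (A x) (B x) / x)
      by exact (is_derive_unique _ _ _ HB).
    auto_derive.
    + repeat split; try (eexists; eassumption); lra.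
    + rewrite EA, EB. unfold rhs_u, rhs_v. field. lra.
Qed.

Lemma is_derive_phi n x : 0 < x -> besselI 0 x <> 0 ->
  (forall k, (1 <= k <= n)%nat -> 1 - phi x k ^ 2 <> 0) ->
  is_derive (fun z => phi z n) x (rhs_u (INR n) x (phi x n) (phi x (S n)) / x) /\
  is_derive (fun z => phi z (S n)) x (rhs_v (INR n) x (phi x n) (phi x (S n)) / x).
Proof.
  intros Hx HI. induction n as [|n IH]; intros Hk.
  - rewrite !phi_0, phi_1. split.
    + replace (rhs_u (INR 0) x 1 (besselI 1 x / besselI 0 x) / x) with 0
        by (unfold rhs_u; simpl INR; field; lra).
      apply is_derive_ext with (fun _ => 1); [reflexivity | auto_derive; auto].
    + apply is_derive_ext with (fun z => besselI 1 z / besselI 0 z); [reflexivity|].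
      assert (D0 := is_derive_besselI 0 x ltac:(lra)).
      assert (D1 := is_derive_besselI_S 0 x ltac:(lra)).
      eapply is_derive_eq; [exact (is_derive_div _ _ _ _ _ D1 D0 HI)|].
      unfold rhs_v. simpl INR. field. lra.
  - destruct IH as [HA HB]; [intros k Hk'; apply Hk; lia|].
    assert (Hb : 1 - phi x (S n) ^ 2 <> 0) by (apply Hk; lia).
    destruct (is_derive_riccati_step (INR n) x (fun z => phi z n) (fun z => phi z (S n))
                Hx HA HB Hb) as [HB' HC].
    rewrite phi_rec, S_INR. split; [exact HB'|].
    apply is_derive_ext with (fun z => phi_next (INR n) z (phi z n) (phi z (S n))); [|exact HC].
    intros z. symmetry. apply phi_rec.
Qed.

(* g, g', H, H' and H'' as rational functions of x = sqrt s, u and v,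
   obtained by differentiating along the Riccati system. *)
Definition g_num (L x u v : R) : R := v * (x * v - x * u ^ 2 * v - 2 * L * u).
Definition g_den (L x u v : R) : R := g_num L x u v + x * u ^ 2.
Definition g_of (L x u v : R) : R := g_num L x u v / g_den L x u v.
Definition dg_num (L x u v : R) : R :=
  4 * L * (L + 1) * u ^ 2 * v - 2 * x * u * v ^ 2 * (1 + 3 * L) * (1 - u ^ 2)
  - 2 * x * L * u ^ 3 + 2 * x ^ 2 * v * (1 - u ^ 2) * (v ^ 2 * (1 - u ^ 2) + u ^ 2).
Definition dg_of (L x u v : R) : R := u * dg_num L x u v / (2 * x * g_den L x u v ^ 2).
Definition H_of (L x u v : R) : R :=
  x ^ 2 * (1 - u ^ 2) * (1 - v ^ 2) / 4 + x * v * ((L + 1) * u ^ 2 - 1) / (2 * u).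
Definition dH_of (L x u v : R) : R := v * (2 * L * u - x * v * (1 - u ^ 2)) / (4 * x * u ^ 2).
Definition d2H_of (L x u v : R) : R := - dg_num L x u v / (8 * x ^ 3 * u ^ 3).

Ltac nonzero :=
  first [ lra | assumption
        | match goal with H : ?h <> 0 |- ?e <> 0 =>
            let E := fresh in intro E; apply H;
            first [ transitivity e; [ring | exact E]
                  | transitivity (- e); [ring | rewrite E; ring] ] end
        | apply Rmult_integral_contrapositive_currified; nonzero
        | apply pow_nonzero; nonzero ].

Lemma is_derive_phi_ratio (L x : R) (A B : R -> R) : 0 < x ->
  is_derive A x (rhs_u L x (A x) (B x) / x) -> is_derive B x (rhs_v L x (A x) (B x) / x) ->
  A x <> 0 ->
  is_derive (fun z => B z / A z) x
    (2 * g_den L x (A x) (B x) / (x * A x ^ 2)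
     - (B x / A x) ^ 2 - (1 - 2 * L) * (B x / A x) / x - 1).
Proof.
  intros Hx HA HB Hu.
  eapply is_derive_eq; [exact (is_derive_div _ _ _ _ _ HB HA Hu)|].
  unfold rhs_u, rhs_v, g_den, g_num. field. split; nonzero.
Qed.

Lemma Rfun_eq lam x : 0 < x -> besselI 0 x <> 0 ->
  (forall k, (1 <= k <= lam)%nat -> 1 - phi x k ^ 2 <> 0) -> phi x lam <> 0 ->
  Rfun lam x = 2 * g_den (INR lam) x (phi x lam) (phi x (S lam)) / (x * phi x lam ^ 2).
Proof.
  intros Hx HI Hk Hu.
  destruct (is_derive_phi lam x Hx HI Hk) as [HA HB].
  unfold Rfun. erewrite is_derive_unique by exact (is_derive_phi_ratio _ _ _ _ Hx HA HB Hu).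
  unfold yfun. ring.
Qed.

(* U and V are u and v as functions of s = x^2; since d/ds = (1/(2x)) d/dx,
   the system becomes U' = rhs_u / (2 s) and V' = rhs_v / (2 s). *)
Definition riccati_at (L : R) (U V : R -> R) (s : R) : Prop :=
  0 < s /\
  is_derive U s (rhs_u L (sqrt s) (U s) (V s) / (2 * s)) /\
  is_derive V s (rhs_v L (sqrt s) (U s) (V s) / (2 * s)) /\
  U s <> 0 /\ g_num L (sqrt s) (U s) (V s) <> 0 /\ g_den L (sqrt s) (U s) (V s) <> 0.

Section RiccatiPair.

Variables (L : R) (U V : R -> R) (s : R).
Hypothesis HUV : riccati_at L U V s.

Ltac derive_pair :=
  destruct HUV as (Hs & HU & HV & Hu & Hn & Hd);
  destruct (Rmult_neq_0_reg _ _ Hn) as [Hv Hw];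
  unfold g_of, dg_of, H_of, dH_of, d2H_of, dg_num, g_den, g_num in *;
  assert (EU : Derive (fun t => U t) s = rhs_u L (sqrt s) (U s) (V s) / (2 * s))
    by exact (is_derive_unique _ _ _ HU);
  assert (EV : Derive (fun t => V t) s = rhs_v L (sqrt s) (U s) (V s) / (2 * s))
    by exact (is_derive_unique _ _ _ HV);
  assert (Hx : 0 < sqrt s) by (apply sqrt_lt_R0; exact Hs);
  assert (Hxu : sqrt s * U s ^ 2 <> 0) by nonzero;
  auto_derive;
  [ repeat split; first [eexists; eassumption | assumption | nonzero]
  | rewrite EU, EV; unfold rhs_u, rhs_v;
    assert (Es : s = sqrt s ^ 2) by (rewrite pow2_sqrt; lra);
    set (x := sqrt s) in *; set (u := U s) in *; set (v := V s) in *;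
    clearbody x u v; subst s;
    field; repeat split; nonzero ].

Lemma is_derive_g_of :
  is_derive (fun t => g_of L (sqrt t) (U t) (V t)) s (dg_of L (sqrt s) (U s) (V s)).
Proof. derive_pair. Qed.

Lemma is_derive_dg_of :
  is_derive (fun t => dg_of L (sqrt t) (U t) (V t)) s
    (let g := g_of L (sqrt s) (U s) (V s) in let g' := dg_of L (sqrt s) (U s) (V s) in
     (3 * g - 1) / (2 * g * (g - 1)) * g' ^ 2 - g' / s
     + (g - 1) ^ 2 / (2 * s ^ 2) * (g - L ^ 2 / g) + g / (2 * s)).
Proof. cbv zeta. derive_pair. Qed.

Lemma is_derive_H_of :
  is_derive (fun t => H_of L (sqrt t) (U t) (V t)) s (dH_of L (sqrt s) (U s) (V s)).
Proof. derive_pair. Qed.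

Lemma is_derive_dH_of :
  is_derive (fun t => dH_of L (sqrt t) (U t) (V t)) s (d2H_of L (sqrt s) (U s) (V s)).
Proof. derive_pair. Qed.

End RiccatiPair.

Lemma H_of_eq_g_formula (L x u v s : R) : 0 < x -> s = x ^ 2 ->
  u <> 0 -> g_num L x u v <> 0 -> g_den L x u v <> 0 ->
  let g := g_of L x u v in
  (s * dg_of L x u v) ^ 2 / (4 * g * (g - 1) ^ 2) - (L + g) ^ 2 / (4 * g)
  + s * g / (4 * (g - 1)) = H_of L x u v.
Proof.
  intros Hx -> Hu Hn Hd g. subst g.
  destruct (Rmult_neq_0_reg _ _ Hn) as [Hv Hw].
  assert (Hxu : x * u ^ 2 <> 0) by nonzero.
  unfold g_of, dg_of, H_of, dg_num, g_den, g_num in *.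
  field. repeat split; nonzero.
Qed.

Lemma H_of_sigma_form (L x u v s : R) : 0 < x -> s = x ^ 2 -> u <> 0 ->
  let H := H_of L x u v in let H' := dH_of L x u v in
  (s * d2H_of L x u v) ^ 2 =
  H' * (4 * H' - 1) * (H - s * H') + / 16 * (4 * (1 + L) * H' - L) ^ 2.
Proof.
  intros Hx -> Hu H H'. subst H H'.
  unfold H_of, dH_of, d2H_of, dg_num. field. split; nonzero.
Qed.

Section Regular.

Variable lam : nat.
Local Notation L := (INR lam).
Local Notation U := (fun t => phi (sqrt t) lam).
Local Notation V := (fun t => phi (sqrt t) (S lam)).

Lemma Rfun_sqrt_eq t : regular_at lam t ->
  Rfun lam (sqrt t) = 2 * g_den L (sqrt t) (U t) (V t) / (sqrt t * U t ^ 2).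
Proof.
  intros (Ht & HI & Hk & Hu & _). apply Rfun_eq; auto. apply sqrt_lt_R0, Ht.
Qed.

Lemma regular_at_g_den t : regular_at lam t -> g_den L (sqrt t) (U t) (V t) <> 0.
Proof.
  intros Hreg E. pose proof Hreg as (_ & _ & _ & _ & HR & _).
  apply HR. rewrite Rfun_sqrt_eq, E by assumption. unfold Rdiv. ring.
Qed.

Lemma gfun_eq t : regular_at lam t -> gfun lam t = g_of L (sqrt t) (U t) (V t).
Proof.
  intros Hreg. pose proof (regular_at_g_den t Hreg) as Hd.
  unfold gfun. rewrite Rfun_sqrt_eq by exact Hreg.
  destruct Hreg as (Ht & _ & _ & Hu & _).
  assert (Hx : 0 < sqrt t) by (apply sqrt_lt_R0; exact Ht).
  unfold g_of, g_den in *. field. repeat split; nonzero.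
Qed.

Lemma regular_at_riccati t : regular_at lam t -> riccati_at L U V t.
Proof.
  intros Hreg. pose proof (gfun_eq t Hreg) as Eg. pose proof (regular_at_g_den t Hreg) as Hd.
  destruct Hreg as (Ht & HI & Hk & Hu & _ & Hg0 & _).
  assert (Hx : 0 < sqrt t) by (apply sqrt_lt_R0; exact Ht).
  destruct (is_derive_phi lam (sqrt t) Hx HI Hk) as [HA HB].
  split; [exact Ht|]. split; [exact (is_derive_comp_sqrt _ _ _ Ht HA)|].
  split; [exact (is_derive_comp_sqrt _ _ _ Ht HB)|].
  split; [exact Hu|]. split; [|exact Hd].
  intros E. apply Hg0. rewrite Eg. unfold g_of. rewrite E. unfold Rdiv. ring.
Qed.

Lemma is_derive_gfun t : locally t (regular_at lam) ->
  is_derive (gfun lam) t (dg_of L (sqrt t) (U t) (V t)).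
Proof.
  intros Hloc.
  apply is_derive_ext_loc with (fun z => g_of L (sqrt z) (U z) (V z)).
  - apply (filter_imp _ _ (fun z Hz => eq_sym (gfun_eq z Hz)) Hloc).
  - apply is_derive_g_of, regular_at_riccati, (locally_singleton _ _ Hloc).
Qed.

Lemma Hfun_eq t : locally t (regular_at lam) -> Hfun lam t = H_of L (sqrt t) (U t) (V t).
Proof.
  intros Hloc. pose proof (locally_singleton _ _ Hloc) as Hreg.
  destruct (regular_at_riccati t Hreg) as (Ht & _ & _ & Hu & Hn & Hd).
  unfold Hfun. rewrite (is_derive_unique _ _ _ (is_derive_gfun t Hloc)), gfun_eq by exact Hreg.
  apply H_of_eq_g_formula; auto.
  - apply sqrt_lt_R0, Ht.
  - rewrite pow2_sqrt; lra.
Qed.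

Lemma is_derive_Hfun t : locally t (fun z => locally z (regular_at lam)) ->
  is_derive (Hfun lam) t (dH_of L (sqrt t) (U t) (V t)).
Proof.
  intros Hloc.
  apply is_derive_ext_loc with (fun z => H_of L (sqrt z) (U z) (V z)).
  - apply (filter_imp _ _ (fun z Hz => eq_sym (Hfun_eq z Hz)) Hloc).
  - apply is_derive_H_of, regular_at_riccati, locally_singleton, (locally_singleton _ _ Hloc).
Qed.

End Regular.

Theorem theorem11 (lam : nat) (s : R) :
  (exists eps : R, 0 < eps /\
     forall t : R, Rabs (t - s) < eps -> regular_at lam t) ->
  let g := gfun lam in
  let H := Hfun lam in
  (ex_derive g s /\ ex_derive (Derive g) s /\
   Derive (Derive g) s =
     (3 * g s - 1) / (2 * g s * (g s - 1)) * (Derive g s) ^ 2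
     - Derive g s / s
     + (g s - 1) ^ 2 / (2 * s ^ 2) * (g s - INR lam ^ 2 / g s)
     + g s / (2 * s)) /\
  (ex_derive H s /\ ex_derive (Derive H) s /\
   (s * Derive (Derive H) s) ^ 2 =
     Derive H s * (4 * Derive H s - 1) * (H s - s * Derive H s)
     + / 16 * (4 * (1 + INR lam) * Derive H s - INR lam) ^ 2).
Proof.
  intros Hball g H. subst g H.
  pose proof (locally_Rabs _ _ Hball) as Hreg.
  pose proof (locally_locally _ _ Hreg) as Hreg2.
  pose proof (locally_locally _ _ Hreg2) as Hreg3.
  pose proof (regular_at_riccati lam s (locally_singleton _ _ Hreg)) as Hric.
  pose proof (filter_imp _ _ (is_derive_gfun lam) Hreg2) as Dg.
  pose proof (filter_imp _ _ (is_derive_Hfun lam) Hreg3) as DH.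
  pose proof (is_derive_Derive_near _ _ _ _ Dg (is_derive_dg_of _ _ _ _ Hric)) as D2g.
  pose proof (is_derive_Derive_near _ _ _ _ DH (is_derive_dH_of _ _ _ _ Hric)) as D2H.
  apply locally_singleton in Dg, DH.
  destruct Hric as (Hs & _ & _ & Hu & _).
  repeat split; try (eexists; eassumption).
  - rewrite (is_derive_unique _ _ _ D2g), (is_derive_unique _ _ _ Dg), gfun_eq
      by exact (locally_singleton _ _ Hreg).
    reflexivity.
  - rewrite (is_derive_unique _ _ _ D2H), (is_derive_unique _ _ _ DH), Hfun_eq by exact Hreg.
    apply H_of_sigma_form; [apply sqrt_lt_R0, Hs | rewrite pow2_sqrt; lra | exact Hu].
Qed.
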